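(* For all integers $\ell\ge1$ and $N\ge2$ there exists an $(N,\ell)$-isolating family of size at most $2^\ell\log_2 N$.
   Context: For $m\in[N]=\{1,\dots,N\}$ and $S\subseteq[N]\setminus\{m\}$, a function $h:[N]\to\{0,1\}^\ell$ isolates $m$ from $S$ if $h(m)\notin\{h(m'):m'\in S\}$. A family $\{h_1,\dots,h_M\}$ of functions $[N]\to\{0,1\}^\ell$ is $(N,\ell)$-isolating if for every $S\subseteq[N]$ with $|S|\le 2^{\ell-1}$ and every $m\in[N]\setminus S$ there is $j\in[M]$ such that $h_j$ isolates $m$ from $S$. *)

From Stdlib Require Import Reals.
From mathcomp Require Import all_boot.
Set Implicit Arguments. Unset Strict Implicit. Unset Printing Implicit Defensive.

(* [N] = {1,..,N} is represented by 'I_N = {0,..,N-1};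
   {0,1}^l is represented by l.-tuple bool. *)

Definition isolates (N l : nat) (h : 'I_N -> l.-tuple bool)
  (m : 'I_N) (S : {set 'I_N}) : bool :=
  h m \notin (h @: S).

Definition isolating_family (N l M : nat)
  (hs : 'I_M -> 'I_N -> l.-tuple bool) : Prop :=
  forall (S : {set 'I_N}) (m : 'I_N),
    #|S| <= 2 ^ (l - 1) -> m \notin S ->
    exists j : 'I_M, isolates (hs j) m S.

Definition log2R (x : R) : R := Rdiv (ln x) (ln 2).

From Stdlib Require Import Reals Lra.
From mathcomp Require Import all_boot.

(* Let k = 2^(l-1).
   - For l = 1 only sets S with |S| <= 1 matter, so any family separating
     points is isolating; the M = floor(log2 N) + 1 binary digit functions
     separate the points of [N], and 2^M <= 2N <= N^2.
   - For l >= 2 we use the probabilistic method, written as a counting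
     argument.  A uniformly random h : [N] -> {0,1}^l fails to isolate m
     from S with probability at most |S| / 2^l <= 1/2.  There are at most
     N * N^k relevant pairs (m, S), so M independent random functions all
     fail on some pair with probability at most N * N^k / 2^M, which is
     below 1 as soon as N * N^k < 2^M.  Taking M minimal,
     2^M <= 2 N N^k <= N^(2k) = N^(2^l).
   In both cases 2^M <= N^(2^l), i.e. M <= 2^l log2 N. *)

Lemma isolates_set0 (N l : nat) (h : 'I_N -> l.-tuple bool) (m : 'I_N) :
  isolates h m set0.
Proof. by rewrite /isolates imset0 inE. Qed.

Lemma INR_expn (m n : nat) : INR (m ^ n) = pow (INR m) n.
Proof. by elim: n => [//|n IH]; rewrite expnS /= -IH -mult_INR. Qed.

Lemma log2_bound (M e N : nat) : 0 < N -> 2 ^ M <= N ^ e ->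
  Rle (INR M) (Rmult (INR e) (log2R (INR N))).
Proof.
move=> N_gt0 /leP/le_INR; rewrite !INR_expn => pow_le.
have N_pos : Rlt 0 (INR N) by apply: lt_0_INR; apply/ltP.
have ln2_pos : Rlt 0 (ln 2) by rewrite -ln_1; apply: ln_increasing; lra.
have ln_le : Rle (ln (pow (INR 2) M)) (ln (pow (INR N) e)).
  case: (Rle_lt_or_eq_dec _ _ pow_le) => [lt|->]; last exact: Rle_refl.
  by apply/Rlt_le/ln_increasing => //; apply: pow_lt; simpl; lra.
rewrite !ln_pow /= in ln_le; try lra.
rewrite /log2R; apply: (Rmult_le_reg_r (ln 2)) => //.
by replace (Rmult (Rmult (INR e) (Rdiv (ln (INR N)) (ln 2))) (ln 2))
  with (Rmult (INR e) (ln (INR N))) by (field; lra).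
Qed.

Lemma trunc_log2_bounds (x : nat) : 0 < x ->
  x < 2 ^ (trunc_log 2 x).+1 <= 2 * x.
Proof.
move=> x_gt0; rewrite trunc_log_ltn // expnS leq_mul2l.
exact: trunc_logP.
Qed.

Definition bit (j x : nat) : bool := odd (x %/ 2 ^ j).

Lemma eq_bits (M a b : nat) : a < 2 ^ M -> b < 2 ^ M ->
  (forall j, j < M -> bit j a = bit j b) -> a = b.
Proof.
elim: M a b => [|M IH] a b.
  by rewrite expn0 !ltnS !leqn0 => /eqP-> /eqP->.
move=> a_lt b_lt same_bits.
rewrite -(odd_double_half a) -(odd_double_half b).
have := same_bits 0 isT; rewrite /bit expn0 !divn1 => ->.
rewrite (IH a./2 b./2) // => [||j lt_jM]; rewrite -?divn2.
- by rewrite ltn_divLR // -expnSr.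
- by rewrite ltn_divLR // -expnSr.
by rewrite /bit -!divnMA -expnS; apply: same_bits.
Qed.

(* For l = 1 only sets with at most one element must be handled, so a
   family of functions separating any two points is isolating. *)
Lemma separating_isolating (N M : nat) (hs : 'I_M -> 'I_N -> 1.-tuple bool) :
  0 < M -> (forall m m', m != m' -> exists j, hs j m != hs j m') ->
  isolating_family hs.
Proof.
move=> M_gt0 separates S m S_le1 m_notin.
have [->|[m' m'S]] := set_0Vmem S; first by exists (Ordinal M_gt0); apply: isolates_set0.
have S1 : S = [set m'].
  by apply/setP => x; move/card_le1P: S_le1 => /(_ m' m'S) ->; rewrite inE.
have [|j sep] := separates m m'; first by apply: contraNneq m_notin => ->.
by exists j; rewrite /isolates S1 imset_set1 inE.
Qed.

Lemma binary_isolating (N M : nat) : 0 < M -> N <= 2 ^ M ->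
  isolating_family (fun (j : 'I_M) (x : 'I_N) => [tuple bit j x]).
Proof.
move=> M_gt0 N_le; apply: separating_isolating => // m m' neq.
apply/existsP; apply: contraNT neq => /existsPn same; apply/eqP/val_inj.
apply: (@eq_bits M); rewrite ?(leq_trans (ltn_ord _) N_le) // => j lt_jM.
by have /negPn/eqP/(congr1 (@thead 0 bool)) := same (Ordinal lt_jM).
Qed.

Lemma card_bigcup_le {I T : finType} (P : pred I) (F : I -> {set T}) :
  #|\bigcup_(i | P i) F i| <= \sum_(i | P i) #|F i|.
Proof.
elim/big_rec2: _ => [|i n U _ le_Un]; first by rewrite cards0.
by rewrite (leq_trans (leq_card_setU _ _).1) ?leq_add2l.
Qed.

(* Probabilistic method in counting form: if fewer than 2^M events each
   have probability at most 1/2, some M-tuple of points of T escapes every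
   event in at least one coordinate. *)
Lemma union_bound (T I : finType) (P : {set I}) (A : I -> {set T}) (M : nat) :
  0 < #|T| -> (forall p, p \in P -> 2 * #|A p| <= #|T|) -> #|P| < 2 ^ M ->
  exists hs : 'I_M -> T, forall p, p \in P -> exists j, hs j \notin A p.
Proof.
move=> T_gt0 small_events few_events.
pose bad p := [set hs : {ffun 'I_M -> T} | [forall j, hs j \in A p]].
have card_bad p : #|bad p| = #|A p| ^ M.
  rewrite -[in RHS](card_ord M) -card_ffun_on; apply: eq_card => hs.
  by rewrite inE; apply/forallP/ffun_onP.
have card_bad_union : #|\bigcup_(p in P) bad p| * 2 ^ M <= #|P| * #|T| ^ M.
  rewrite (leq_trans (leq_mul (card_bigcup_le _ _) (leqnn _))) //.
  rewrite big_distrl -sum_nat_const; apply: leq_sum => p pP.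
  rewrite card_bad /= -expnMn mulnC.
  have [->|M_gt0] := posnP M; first by rewrite !expn0.
  by rewrite leq_exp2r ?small_events.
have : ~~ ([set: {ffun 'I_M -> T}] \subset \bigcup_(p in P) bad p).
  apply: contraTN card_bad_union => /subset_leq_card.
  rewrite cardsT card_ffun card_ord -ltnNge => le_all.
  by rewrite mulnC (leq_trans _ (leq_mul le_all (leqnn _))) // ltn_pmul2l ?expn_gt0 ?T_gt0.
case/subsetPn => hs _ /bigcupP escapes; exists hs => p pP.
apply/existsP; apply: contra_notT escapes => /existsPn never_escapes.
by exists p => //; rewrite inE; apply/forallP => j; apply/negPn/never_escapes.
Qed.

Lemma card_collide {I V : finType} (m m' : I) (c : V) : m != m' ->
  #|[set h : {ffun I -> V} | (h m == c) && (h m' == c)]| = #|V| ^ (#|I| - 2).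
Proof.
move=> neq.
pose F x := if (x == m) || (x == m') then pred1 c else @predT V.
have -> : #|[set h : {ffun I -> V} | (h m == c) && (h m' == c)]| =
          #|(family F : simpl_pred {ffun I -> V})|.
  apply: eq_card => h; rewrite inE; apply/andP/familyP.
    move=> [/eqP hm /eqP hm'] x; rewrite /F.
    by case: eqP => [->|_]; [|case: eqP => [->|_]]; rewrite //= inE ?hm ?hm'.
  by move=> inF; move: (inF m) (inF m'); rewrite /F !eqxx orbT !inE => -> ->.
rewrite card_family foldrE big_image /=.
rewrite (eq_bigr (fun x => if ~~ ((x == m) || (x == m')) then #|V| else 1)).
  rewrite -big_mkcondr /= prod_nat_const; congr (_ ^ _).
  have := cardsC [set m; m']; rewrite cards2 neq => <-.
  by rewrite addKn; apply: eq_card => x; rewrite !inE.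
by move=> x _; rewrite /F; case: ifP => _ /=; [exact: card1 | rewrite cardT -cardE].
Qed.

Lemma card_hit (I V : finType) (m : I) (S : {set I}) : 1 < #|I| -> m \notin S ->
  #|[set h : {ffun I -> V} | h m \in h @: S]| <= #|S| * #|V| ^ #|I|.-1.
Proof.
move=> I_gt1 m_notin.
pose collide m' c := [set h : {ffun I -> V} | (h m == c) && (h m' == c)].
have hit_sub : [set h : {ffun I -> V} | h m \in h @: S] \subset
               \bigcup_(m' in S) \bigcup_(c : V) collide m' c.
  apply/subsetP => h; rewrite inE => /imsetP[m' m'S hm].
  apply/bigcupP; exists m' => //; apply/bigcupP; exists (h m) => //.
  by rewrite inE eqxx -hm eqxx.
rewrite (leq_trans (subset_leq_card hit_sub)) ?(leq_trans (card_bigcup_le _ _)) //.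
rewrite -sum_nat_const leq_sum // => m' m'S.
rewrite (leq_trans (card_bigcup_le _ _)) //.
have neq : m != m' by apply: contraNneq m_notin => ->.
rewrite (eq_bigr _ (fun c _ => card_collide m m' c neq)) sum_nat_const cardT -cardE.
by rewrite -expnS -subSn // subSS subn1.
Qed.

(* Nonempty sets of at most k elements are images of k-tuples. *)
Lemma card_small_sets (T : finType) (k : nat) :
  #|[set S : {set T} | (S != set0) && (#|S| <= k)]| <= #|T| ^ k.
Proof.
pose range (f : {ffun 'I_k -> T}) := [set f i | i : 'I_k].
have small_sub : [set S : {set T} | (S != set0) && (#|S| <= k)] \subset
                 [set range f | f : {ffun 'I_k -> T}].
  apply/subsetP => S; rewrite inE => /andP[/set0Pn[x0 Sx0] S_le].
  apply/imsetP; exists [ffun i : 'I_k => nth x0 (enum S) i] => //.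
  apply/setP => y; apply/idP/imsetP => [yS|[i _ ->]].
    have lt_yk : index y (enum S) < k.
      by rewrite (leq_trans _ S_le) // cardE index_mem mem_enum.
    by exists (Ordinal lt_yk); rewrite // ffunE nth_index ?mem_enum.
  rewrite ffunE; have [lt_iS|le_Si] := ltnP i (size (enum S)).
    by rewrite -mem_enum mem_nth.
  by rewrite nth_default.
rewrite (leq_trans (subset_leq_card small_sub)) ?(leq_trans (leq_imset_card _ _)) //.
by rewrite card_ffun card_ord.
Qed.

Lemma random_isolating (l N M : nat) : 1 <= l -> 2 <= N -> 0 < M ->
  N * N ^ 2 ^ (l - 1) < 2 ^ M ->
  exists hs : 'I_M -> 'I_N -> l.-tuple bool, isolating_family hs.
Proof.
move=> l_gt0 N_gt1 M_gt0 few_pairs.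
set k := 2 ^ (l - 1).
have two_k : 2 * k = 2 ^ l by rewrite -expnS subn1 prednK.
pose T := {ffun 'I_N -> l.-tuple bool}.
pose small := [set S : {set 'I_N} | (S != set0) && (#|S| <= k)].
pose pairs := [set p : 'I_N * {set 'I_N} | (p.1 \notin p.2) && (p.2 \in small)].
pose fails (p : 'I_N * {set 'I_N}) := [set h : T | h p.1 \in h @: p.2].
have card_V : #|{: l.-tuple bool}| = 2 ^ l by rewrite card_tuple card_bool.
have card_T : #|T| = (2 ^ l) ^ N by rewrite card_ffun card_V card_ord.
have [hs good] : exists hs : 'I_M -> T,
    forall p, p \in pairs -> exists j, hs j \notin fails p.
  apply: union_bound; first by rewrite card_T expn_gt0 expn_gt0.
    move=> [m S]; rewrite !inE /= => /andP[m_notin /andP[_ S_le]].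
    have := @card_hit _ (l.-tuple bool) m S; rewrite card_ord card_V.
    move=> /(_ N_gt1 m_notin) /(leq_mul (leqnn 2)) /leq_trans-> //.
    rewrite card_T -[in X in _ <= X](prednK (ltnW N_gt1)) expnS mulnA.
    by rewrite leq_mul2r -two_k leq_mul2l S_le !orbT.
  have pairs_sub : pairs \subset setX [set: 'I_N] small.
    by apply/subsetP => -[m S]; rewrite !inE => /andP[].
  rewrite (leq_ltn_trans (subset_leq_card pairs_sub)) // cardsX cardsT card_ord.
  have := card_small_sets 'I_N k; rewrite card_ord => small_le.
  by rewrite (leq_ltn_trans _ few_pairs) // leq_mul2l small_le orbT.
exists (fun j x => hs j x) => S m S_le m_notin.
have [->|S_ne] := eqVneq S set0; first by exists (Ordinal M_gt0); apply: isolates_set0.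
have /good[j] : (m, S) \in pairs by rewrite !inE m_notin S_ne S_le.
by rewrite inE; exists j.
Qed.

Theorem mainTheorem10 (l N : nat) (hl : 1 <= l) (hN : 2 <= N) :
  exists (M : nat) (hs : 'I_M -> 'I_N -> l.-tuple bool),
    isolating_family hs /\
    Rle (INR M) (Rmult (pow 2 l) (log2R (INR N))).
Proof.
have size_ok M : 2 ^ M <= N ^ 2 ^ l -> Rle (INR M) (Rmult (pow 2 l) (log2R (INR N))).
  by move=> le_M; have := @log2_bound M (2 ^ l) N (ltnW hN) le_M; rewrite INR_expn.
have two_N : 2 * N <= N ^ 2 by rewrite mulnC expnS expn1 leq_mul2l hN orbT.
case: l hl size_ok => [//|[|l]] _ size_ok.
  (* l = 1: binary digits, with 2^M <= 2N <= N^2 *)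
  have /andP[N_lt M_le] := trunc_log2_bounds N (ltnW hN).
  exists (trunc_log 2 N).+1, (fun j x => [tuple bit j x]); split.
    exact: binary_isolating _ _ (ltnW N_lt).
  exact/size_ok/(leq_trans M_le).
(* l >= 2: counting, with 2^M <= 2 N N^k <= N^(2k) where k = 2^(l-1) >= 2 *)
set k := 2 ^ (l.+2 - 1).
have N_pos : 0 < N * N ^ k by rewrite muln_gt0 expn_gt0 ltnW.
have /andP[few_pairs M_le] := trunc_log2_bounds _ N_pos.
have [hs isolating] := random_isolating l.+2 N _ isT hN (ltn0Sn _) few_pairs.
exists (trunc_log 2 (N * N ^ k)).+1, hs; split => //; apply/size_ok/(leq_trans M_le).
have k_ge2 : 2 <= k by rewrite /k subn1 /= (@leq_pexp2l 2 1).
have two_k : 2 ^ l.+2 = k + k by rewrite /k subn1 /= expnS mul2n addnn.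
rewrite two_k expnD mulnA leq_mul2r (leq_trans two_N) ?orbT //.
exact: leq_pexp2l (ltnW hN) k_ge2.
Qed.
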